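(* Let $H$ be a $3$-graph for which there is an enumeration $V(H)=\{v_1,\dots,v_n\}$ and a colouring $\phi$ of the pairs $\{v_a,v_b\}$ covered by edges of $H$ with colours red, blue, green such that every edge $\{v_i,v_j,v_k\}\in E(H)$ with $i<j<k$ satisfies $\phi(v_iv_j)=\text{red}$, $\phi(v_iv_k)=\text{blue}$, $\phi(v_jv_k)=\text{green}$. Then every subhypergraph $H'\subseteq H$ satisfies $\delta_{\mathrm{co}}(H')\le 1$.
   Context: A $3$-graph is a $3$-uniform hypergraph. For a $3$-graph $H$ and a $2$-subset $S\subseteq V(H)$, $d_H(S)$ is the number of edges containing $S$, and the minimum codegree $\delta_{\mathrm{co}}(H)$ is the minimum of $d_H(S)$ over all $2$-subsets $S$ of $V(H)$. *)

From mathcomp Require Import all_boot.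
Set Implicit Arguments. Unset Strict Implicit. Unset Printing Implicit Defensive.

Definition is_3graph (T : finType) (V : {set T}) (E : {set {set T}}) : Prop :=
  forall f, f \in E -> f \subset V /\ #|f| = 3.

Definition subhypergraph (T : finType) (V' : {set T}) (E' : {set {set T}})
    (V : {set T}) (E : {set {set T}}) : Prop :=
  [/\ V' \subset V, E' \subset E & forall f, f \in E' -> f \subset V'].

Definition codeg (T : finType) (E : {set {set T}}) (S : {set T}) : nat :=
  #|[set f in E | S \subset f]|.

(* delta_co(H) <= k, i.e. the minimum over 2-subsets S of V of d_H(S) is <= k,
   written out: some 2-subset S of V has d_H(S) <= k. *)
Definition mincodeg_le (T : finType) (V : {set T}) (E : {set {set T}}) (k : nat) : Prop :=
  exists S : {set T}, [/\ S \subset V, #|S| = 2 & codeg E S <= k].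

Inductive colour := red | blue | green.

From mathcomp Require Import all_boot.

Set Implicit Arguments.
Unset Strict Implicit.
Unset Printing Implicit Defensive.

(* Let v1, v2 be the first two vertices of H' in the enumeration.  If the pair
   v1 v2 lies in two edges of H' we are done; otherwise it lies in an edge
   v1 v2 y with v2 < y, so v2 y is green.  A third vertex z of an edge through
   a green pair v2 y must precede v2 (z between them would make v2 y blue, z
   after y would make it red), and in H' only v1 precedes v2.  Hence v1 v2 y is
   the only edge of H' through v2 y. *)

Lemma card_set3_le (T : finType) (a b c : T) : #|[set a; b; c]| <= 3.
Proof.
apply: leq_trans (leq_card_setU _ _) _.
by rewrite cards1 addn1 ltnS cards2; case: (a != b).
Qed.

Lemma exists_two_least (T : finType) (A : {set T}) (g : T -> nat) :
  {in A &, injective g} -> 1 < #|A| ->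
  exists a b, [/\ a \in A, b \in A, g a < g b &
                  forall z, z \in A -> z != a -> z != b -> g b < g z].
Proof.
move=> g_inj A_gt1.
have lt_of_le x y : x \in A -> y \in A -> x != y -> g x <= g y -> g x < g y.
  move=> xA yA xy; rewrite leq_eqVlt => /orP[/eqP gxy|] //.
  by rewrite (g_inj x y xA yA gxy) eqxx in xy.
have /set0Pn[x0 x0A] : A != set0 by rewrite -card_gt0 ltnW.
case: (@arg_minnP _ _ (fun x => x \in A) g x0A) => a /= aA a_min.
have /set0Pn[x1 x1A'] : A :\ a != set0.
  by rewrite -card_gt0; move: A_gt1; rewrite (cardsD1 a A) aA.
case: (@arg_minnP _ _ (fun x => x \in A :\ a) g x1A') => b /=.
rewrite in_setD1 => /andP[ba bA] b_min.
exists a, b; split=> //.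
  by apply: lt_of_le => //; [rewrite eq_sym | exact: a_min].
move=> z zA za zb; apply: lt_of_le => //; first by rewrite eq_sym.
by apply: b_min; rewrite in_setD1 za.
Qed.

Lemma codeg_le1 (T : finType) (E : {set {set T}}) (S U : {set T}) (k : nat) :
  (forall f, f \in E -> #|f| = k) -> #|U| <= k ->
  (forall f, f \in E -> S \subset f -> f \subset U) -> codeg E S <= 1.
Proof.
move=> E_unif U_le sub_U; rewrite /codeg -(cards1 U); apply: subset_leq_card.
apply/subsetP => f; rewrite inE => /andP[fE Sf].
by rewrite in_set1; apply/eqP/eqP; rewrite eqEcard sub_U // (E_unif f fE).
Qed.

Lemma mincodeg_le_pair (T : finType) (V : {set T}) (E : {set {set T}})
    (k : nat) (a b : T) :
  a \in V -> b \in V -> a != b -> codeg E [set a; b] <= k -> mincodeg_le V E k.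
Proof.
move=> aV bV ab cab; exists [set a; b]; split=> //; last by rewrite cards2 ab.
by rewrite subUset !sub1set aV bV.
Qed.

Section OrderedColouring.

Variables (T : finType) (V : {set T}) (E : {set {set T}}).
Variables (rank : T -> nat) (phi : {set T} -> colour).
Hypothesis E_3graph : is_3graph V E.
Hypothesis rank_inj : {in V &, injective rank}.
Hypothesis E_coloured : forall f, f \in E -> forall i j k,
  i \in f -> j \in f -> k \in f -> rank i < rank j -> rank j < rank k ->
  [/\ phi [set i; j] = red, phi [set i; k] = blue & phi [set j; k] = green].

Lemma green_pair_third_vertex_below f a b z :
  f \in E -> a \in f -> b \in f -> z \in f -> rank a < rank b ->
  phi [set a; b] = green -> z != a -> z != b -> rank z < rank a.
Proof.
move=> fE af bf zf ab green_ab za zb.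
have fV : {subset f <= V} by apply/subsetP; case: (E_3graph fE).
have rank_neq x : x \in f -> z != x -> rank z != rank x.
  by move=> xf; apply: contraNneq => /(rank_inj (fV z zf) (fV x xf)) ->.
rewrite ltn_neqAle rank_neq //= leqNgt; apply/negP => az.
have [bz|zb'|/esym/eqP] := ltngtP (rank b) (rank z).
- by case: (E_coloured fE af bf zf ab bz); rewrite green_ab.
- by case: (E_coloured fE af zf bf az zb') => _; rewrite green_ab.
- by rewrite (negPf (rank_neq b bf zb)).
Qed.

Lemma codeg_green_pair_le1 (V' : {set T}) (E' : {set {set T}}) c a b :
  E' \subset E -> (forall f, f \in E' -> f \subset V') ->
  (forall z, z \in V' -> rank z < rank a -> z = c) ->
  rank a < rank b -> phi [set a; b] = green -> codeg E' [set a; b] <= 1.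
Proof.
move=> sE'E E'_subV' only_c ab green_ab.
have E'E g : g \in E' -> g \in E by move/(subsetP sE'E).
apply: (@codeg_le1 _ _ _ [set c; a; b] 3) => [f /E'E /E_3graph[] //||g gE'].
  exact: card_set3_le.
rewrite subUset !sub1set => /andP[ag bg]; apply/subsetP => z zg.
apply: contraT; rewrite !inE !negb_or => /andP[/andP[zc za] zb].
have zV' : z \in V' by apply: (subsetP (E'_subV' g gE')).
have := green_pair_third_vertex_below (E'E g gE') ag bg zg ab green_ab za zb.
by move=> /(only_c z zV') zc'; rewrite zc' eqxx in zc.
Qed.

End OrderedColouring.

Theorem mainTheorem2 (T : finType) (V : {set T}) (E : {set {set T}})
  (enum_ : T -> nat) (phi : {set T} -> colour) :
  is_3graph V E ->
  {in V &, injective enum_} ->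
  (forall f, f \in E -> forall i j k, i \in f -> j \in f -> k \in f ->
     enum_ i < enum_ j -> enum_ j < enum_ k ->
     [/\ phi [set i; j] = red, phi [set i; k] = blue & phi [set j; k] = green]) ->
  forall (V' : {set T}) (E' : {set {set T}}),
    subhypergraph V' E' V E -> 2 <= #|V'| -> mincodeg_le V' E' 1.
Proof.
move=> E_3graph enum_inj coloured V' E' [sV'V sE'E E'_subV'] V'_ge2.
have [v1 [v2 [v1V' v2V' lt12 least]]] :=
  exists_two_least (sub_in2 (subsetP sV'V) enum_inj) V'_ge2.
have v12 : v1 != v2 by apply: contraTneq lt12 => ->; rewrite ltnn.
have [|codeg12] := leqP (codeg E' [set v1; v2]) 1; first exact: mincodeg_le_pair.
have /set0Pn[f] : [set f in E' | [set v1; v2] \subset f] != set0.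
  by rewrite -card_gt0 ltnW.
rewrite inE subUset !sub1set => /andP[fE' /andP[v1f v2f]].
have fE : f \in E by apply: (subsetP sE'E).
have /subsetPn[y yf] : ~~ (f \subset [set v1; v2]).
  apply/negP => /subset_leq_card.
  by rewrite (E_3graph f fE).2 cards2 v12.
rewrite !inE negb_or => /andP[yv1 yv2].
have yV' : y \in V' by apply: (subsetP (E'_subV' f fE')).
have lt2y := least y yV' yv1 yv2.
have [_ _ green2y] := coloured f fE v1 v2 y v1f v2f yf lt12 lt2y.
have only_v1 z : z \in V' -> enum_ z < enum_ v2 -> z = v1.
  move=> zV' ltz2; case: (eqVneq z v1) => // zv1.
  have zv2 : z != v2 by apply: contraTneq ltz2 => ->; rewrite ltnn.
  by move: (least z zV' zv1 zv2) => /(ltn_trans ltz2); rewrite ltnn.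
apply: (mincodeg_le_pair v2V' yV'); first by rewrite eq_sym.
exact: (codeg_green_pair_le1 E_3graph enum_inj coloured sE'E E'_subV' only_v1).
Qed.
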